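(* Let $n$ be a positive integer, let $\mathbf{A}$ be an infinite $n$-generated subdirectly irreducible bi-Heyting algebra validating $LFC$, and let $\mathfrak{X}=\mathbf{A}_*$. Then every $x\in X$ has at most $2^n$ immediate predecessors that are minimal points of $\mathfrak{X}$.
   Context: Bi-Heyting algebras are bounded distributive lattices with residuated $\to$ and $\leftarrow$ ($c\le a\to b$ iff $a\wedge c\le b$; $a\leftarrow b\le c$ iff $a\le b\vee c$). $\mathbf{A}_*$ is the bi-Esakia dual: prime filters ordered by inclusion, with the Priestley topology generated by $\{F: a\in F\}$ and their complements. $LFC=\mathsf{bi\text{-}LC}+\beta(\mathfrak{F}_0)+\mathcal{J}(\mathfrak{F}_1)+\mathcal{J}(\mathfrak{F}_2)+\mathcal{J}(\mathfrak{F}_3)$, with $\mathsf{bi\text{-}LC}$ being bi-intuitionistic logic plus $(p\to q)\vee(q\to p)$. For SI $\mathbf{A}$ validating $\mathsf{bi\text{-}LC}$, $\mathbf{A}_*$ is a bi-Esakia co-tree: it has a greatest element and principal upsets are chains. For such $\mathfrak{X}$ and a finite co-tree $\mathfrak{Y}$: - $\mathfrak{X}$ refutes $\beta(\mathfrak{Y})$ iff $\mathfrak{Y}$ order-embeds into $\mathfrak{X}$; - $\mathfrak{X}$ refutes $\mathcal{J}(\mathfrak{Y})$ iff there is a continuous surjective bi-p-morphism $\mathfrak{X}\to\mathfrak{Y}$. The co-trees are: - $\mathfrak{F}_0$: $d<b<a$, $e<c<a$; - $\mathfrak{F}_1$: the chain $c<b<a$; - $\mathfrak{F}_2$: the chain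 $d<c<b<a$ plus $a'<a$, with $a'$ incomparable to $b,c,d$; - $\mathfrak{F}_3$: a top over three incomparable minimal points. $y$ is an immediate predecessor of $x$ if $y<x$ and nothing lies strictly between them. *)

From HB Require Import structures.
From mathcomp Require Import all_boot all_order.
Set Implicit Arguments. Unset Strict Implicit. Unset Printing Implicit Defensive.
Import Order.LTheory.

Record finPoset := FinPoset { fp_T : finType; fp_le : rel fp_T }.

(* F0 : a=0, b=1, c=2, d=3, e=4 ;  d<b<a, e<c<a *)
Definition F0 : finPoset := @FinPoset 'I_5 (fun x y : 'I_5 =>
  [|| nat_of_ord x == nat_of_ord y, nat_of_ord y == 0,
      (nat_of_ord x == 3) && (nat_of_ord y == 1) |
      (nat_of_ord x == 4) && (nat_of_ord y == 2)]).
(* F1 : chain c<b<a with a=0, b=1, c=2 *)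
Definition F1 : finPoset := @FinPoset 'I_3 (fun x y : 'I_3 => leq y x).
(* F2 : a=0, b=1, c=2, d=3, a'=4 ; chain d<c<b<a and a'<a *)
Definition F2 : finPoset := @FinPoset 'I_5 (fun x y : 'I_5 =>
  [|| nat_of_ord x == nat_of_ord y, nat_of_ord y == 0 |
      [&& leq x 3, leq y 3 & leq y x]]).
Definition F3 : finPoset := @FinPoset 'I_4 (fun x y : 'I_4 =>
  (nat_of_ord x == nat_of_ord y) || (nat_of_ord y == 0)).

Local Open Scope order_scope.

Definition is_biHeyting {d : Order.disp_t} {L : tbDistrLatticeType d}
  (imp coimp : L -> L -> L) : Prop :=
  (forall a b c : L, (c <= imp a b) = (a `&` c <= b)) /\
  (forall a b c : L, (coimp a b <= c) = (a <= b `|` c)).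

Inductive generated {d : Order.disp_t} {L : tbDistrLatticeType d}
  (imp coimp : L -> L -> L) (G : L -> Prop) : L -> Prop :=
| gen_base x : G x -> generated imp coimp G x
| gen_bot : generated imp coimp G \bot
| gen_top : generated imp coimp G \top
| gen_meet x y : generated imp coimp G x -> generated imp coimp G y ->
    generated imp coimp G (x `&` y)
| gen_join x y : generated imp coimp G x -> generated imp coimp G y ->
    generated imp coimp G (x `|` y)
| gen_imp x y : generated imp coimp G x -> generated imp coimp G y ->
    generated imp coimp G (imp x y)
| gen_coimp x y : generated imp coimp G x -> generated imp coimp G y ->
    generated imp coimp G (coimp x y).

Definition n_generated {d : Order.disp_t} {L : tbDistrLatticeType d}
  (imp coimp : L -> L -> L) (n : nat) : Prop :=
  exists g : 'I_n -> L,
    forall x : L, generated imp coimp (fun y => exists i, y = g i) x.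

Definition infinite_alg {d : Order.disp_t} (L : tbDistrLatticeType d) : Prop :=
  ~ exists s : seq L, forall x : L, x \in s.

Definition bh_congruence {d : Order.disp_t} {L : tbDistrLatticeType d}
  (imp coimp : L -> L -> L) (th : L -> L -> Prop) : Prop :=
  [/\ (forall x, th x x), (forall x y, th x y -> th y x),
      (forall x y z, th x y -> th y z -> th x z) &
      (forall x x' y y', th x x' -> th y y' ->
        [/\ th (x `&` y) (x' `&` y'), th (x `|` y) (x' `|` y'),
            th (imp x y) (imp x' y') & th (coimp x y) (coimp x' y')])].

(* subdirectly irreducible: the non-identity congruences have a
   non-identity intersection (Birkhoff's formulation) *)
Definition subdirectly_irreducible {d : Order.disp_t} {L : tbDistrLatticeType d}
  (imp coimp : L -> L -> L) : Prop :=
  exists a b : L, a <> b /\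
    forall th, bh_congruence imp coimp th ->
      (exists x y, x <> y /\ th x y) -> th a b.

Record prime_filter {d : Order.disp_t} {L : tbDistrLatticeType d}
  (F : L -> Prop) : Prop := {
  pf_top : F \top;
  pf_bot : ~ F \bot;
  pf_up : forall a b, a <= b -> F a -> F b;
  pf_meet : forall a b, F a -> F b -> F (a `&` b);
  pf_prime : forall a b, F (a `|` b) -> F a \/ F b }.

Record point {d : Order.disp_t} (L : tbDistrLatticeType d) := Point {
  pset : L -> Prop; pprime : prime_filter pset }.

Section DualSpace.
Context {d : Order.disp_t} {L : tbDistrLatticeType d}.

Definition ple (x y : point L) : Prop := forall a, pset x a -> pset y a.
Definition plt (x y : point L) : Prop := ple x y /\ ~ ple y x.
Definition same (x y : point L) : Prop := ple x y /\ ple y x.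
Definition minimal (x : point L) : Prop := forall y, ~ plt y x.
Definition immediate_pred (y x : point L) : Prop :=
  plt y x /\ ~ exists z, plt y z /\ plt z x.

(* Priestley topology: subbasis {F | a in F} and their complements *)
Definition basic_nbhd (cs : seq (L * bool)) (x : point L) : Prop :=
  forall c, c \in cs -> if c.2 then pset x c.1 else ~ pset x c.1.
Definition popen (U : point L -> Prop) : Prop :=
  forall x, U x -> exists cs, basic_nbhd cs x /\ forall y, basic_nbhd cs y -> U y.

(* maps into a finite (discrete) poset *)
Definition continuous_to (Y : finPoset) (f : point L -> fp_T Y) : Prop :=
  forall y, popen (fun x => f x = y).
Definition bi_p_morphism (Y : finPoset) (f : point L -> fp_T Y) : Prop :=
  [/\ (forall x x', ple x x' -> fp_le (f x) (f x')),
      (forall x y, fp_le (f x) y -> exists x', ple x x' /\ f x' = y) &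
      (forall x y, fp_le y (f x) -> exists x', ple x' x /\ f x' = y)].

Definition refutes_J (Y : finPoset) : Prop :=
  exists f : point L -> fp_T Y,
    [/\ continuous_to f, (forall y, exists x, f x = y) & bi_p_morphism f].
Definition refutes_beta (Y : finPoset) : Prop :=
  exists e : fp_T Y -> point L, forall y y', fp_le y y' <-> ple (e y) (e y').
End DualSpace.

Definition validates_biLC {d : Order.disp_t} {L : tbDistrLatticeType d}
  (imp : L -> L -> L) : Prop :=
  forall p q : L, imp p q `|` imp q p = \top.

Definition validates_LFC {d : Order.disp_t} {L : tbDistrLatticeType d}
  (imp coimp : L -> L -> L) : Prop :=
  [/\ validates_biLC imp, ~ @refutes_beta d L F0, ~ @refutes_J d L F1,
      ~ @refutes_J d L F2 & ~ @refutes_J d L F3].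

From HB Require Import structures.
From mathcomp Require Import all_boot all_order.
From mathcomp Require Import boolp classical_sets.
Set Implicit Arguments. Unset Strict Implicit. Unset Printing Implicit Defensive.
Import Order.LTheory.
Local Open Scope order_scope.

(* A minimal immediate predecessor y of x is determined by the generators it
   contains: by induction on terms, two such points contain the same elements.
   Meets and joins are handled by primeness; co-implications because at a
   minimal point [coimp a b] holds iff [a] holds and [b] fails; implications
   because, by bi-LC, every point above an immediate predecessor of x is either
   equivalent to it or above x.  So these points inject into the subsets of the
   n generators. *)

Section PrimeFilterTheorem.
Context {d : Order.disp_t} {L : tbDistrLatticeType d}.
Implicit Types (F G I J : L -> Prop) (a b c t : L) (x : point L).

Definition is_filter F :=
  [/\ F \top, (forall a b, a <= b -> F a -> F b) &
      (forall a b, F a -> F b -> F (a `&` b))].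

Definition is_ideal I :=
  [/\ I \bot, (forall a b, a <= b -> I b -> I a) &
      (forall a b, I a -> I b -> I (a `|` b))].

Definition avoids F I := forall c, F c -> I c -> False.

Definition filter_adjoin G c t := exists g, G g /\ g `&` c <= t.

Definition ideal_adjoin J c t := exists j, J j /\ t <= j `|` c.

Lemma principal_filter a : is_filter (fun t => a <= t).
Proof.
split; first exact: lex1.
- by move=> b c /[swap]; apply: le_trans.
- by move=> b c ab ac; rewrite lexI ab ac.
Qed.

Lemma principal_ideal b : is_ideal (fun t => t <= b).
Proof.
split; first exact: le0x.
- by move=> a c; apply: le_trans.
- by move=> a c ab cb; rewrite leUx ab cb.
Qed.

Lemma filter_adjoin_filter G c : is_filter G -> is_filter (filter_adjoin G c).
Proof.
case=> Gt _ Gmeet; split.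
- by exists \top; split; last exact: lex1.
- by move=> a b ab [g [Gg gca]]; exists g; split; last exact: le_trans ab.
- move=> a b [g1 [Gg1 le1]] [g2 [Gg2 le2]]; exists (g1 `&` g2); split.
    exact: Gmeet.
  rewrite lexI; apply/andP; split.
    by apply: le_trans le1; apply: leI2 => //; apply: leIl.
  by apply: le_trans le2; apply: leI2 => //; apply: leIr.
Qed.

Lemma filter_adjoin_sub G c t : G t -> filter_adjoin G c t.
Proof. by exists t; split; last exact: leIl. Qed.

Lemma filter_adjoin_elt G c : is_filter G -> filter_adjoin G c c.
Proof. by case=> Gt _ _; exists \top; split; last exact: leIr. Qed.

Lemma ideal_adjoin_ideal J c : is_ideal J -> is_ideal (ideal_adjoin J c).
Proof.
case=> Jb _ Jjoin; split.
- by exists \bot; split; last exact: le0x.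
- by move=> a b ab [j [Jj bjc]]; exists j; split; last exact: le_trans bjc.
- move=> a b [j1 [Jj1 le1]] [j2 [Jj2 le2]]; exists (j1 `|` j2); split.
    exact: Jjoin.
  rewrite leUx; apply/andP; split.
    by apply: (le_trans le1); apply: leU2 => //; apply: leUl.
  by apply: (le_trans le2); apply: leU2 => //; apply: leUr.
Qed.

Lemma ideal_adjoin_sub J c t : J t -> ideal_adjoin J c t.
Proof. by exists t; split; last exact: leUl. Qed.

Lemma ideal_adjoin_elt J c : is_ideal J -> ideal_adjoin J c c.
Proof. by case=> Jb _ _; exists \bot; split; last exact: leUr. Qed.

Lemma chain_union_filter F (C : set (set L)) :
  is_filter F -> total_on C subset ->
  (forall X, C X -> is_filter (fun t => X t \/ F t)) ->
  is_filter (fun t => bigcup C id t \/ F t).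
Proof.
case=> Ft Fup Fmeet Ctot CF.
have lift X t : C X -> X t \/ F t -> bigcup C id t \/ F t.
  by move=> CX [Xt|Ft']; [left; exists X|right].
have common a b : bigcup C id a \/ F a -> bigcup C id b \/ F b ->
    F a /\ F b \/ exists2 X, C X & (X a \/ F a) /\ (X b \/ F b).
  case=> [[X CX Xa]|Fa] [[Y CY Yb]|Fb]; try by [left | right; eauto].
  by case: (Ctot X Y CX CY) => [XY|YX]; right; [exists Y|exists X]; auto.
split; first by right.
- move=> a b ab Ha; case: (common a a Ha Ha) => [[Fa _]|[X CX [Xa _]]].
    by right; apply: Fup Fa.
  by apply: (lift X) => //; case: (CF X CX) => _ up _; apply: up Xa.
- move=> a b Ha Hb; case: (common a b Ha Hb) => [[Fa Fb]|[X CX [Xa Xb]]].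
    by right; apply: Fmeet.
  by apply: (lift X) => //; case: (CF X CX) => _ _ meet; apply: meet.
Qed.

Lemma ex_maximal_filter F I :
  is_filter F -> avoids F I ->
  exists G, [/\ is_filter G, (forall c, F c -> G c), avoids G I &
    forall G', is_filter G' -> (forall c, G c -> G' c) -> avoids G' I ->
      forall c, G' c -> G c].
Proof.
move=> hF FI.
(* [Zorn_bigcup] needs the empty union in the family, so it ranges over the [A]
   with [A \/ F] a filter avoiding [I] rather than over filters containing [F]. *)
pose P (A : set L) :=
  is_filter (fun t => A t \/ F t) /\ avoids (fun t => A t \/ F t) I.
have [A [[hA AI] Amax]] : exists A, P A /\ forall B, proper A B -> ~ P B.
  apply: Zorn_bigcup => C CP Ctot; split.
    by apply: chain_union_filter => // X /CP[].
  move=> c [[X CX Xc]|Fc]; last exact: FI.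
  by case: (CP X CX) => _ XI; apply: XI; left.
exists (fun t => A t \/ F t); split => //; first by move=> c; right.
move=> G' hG' AG' G'I c G'c; left.
have G'E : (fun t => G' t \/ F t) = G'.
  apply: funext => t; apply: propext; split=> [[//|Ft]|]; last by left.
  by apply: AG'; right.
apply: contrapT => nAc; apply: (Amax G'); last by rewrite /P G'E.
by split=> [t At|G'A]; [apply: AG'; left|apply/nAc/G'A].
Qed.

Lemma maximal_filter_prime G I :
  is_filter G -> is_ideal I -> avoids G I ->
  (forall G', is_filter G' -> (forall c, G c -> G' c) -> avoids G' I ->
     forall c, G' c -> G c) ->
  prime_filter G.
Proof.
move=> hG hI GI Gmax; have [Gt Gup Gmeet] := hG; have [Ib Idn Ijoin] := hI.
have escape c : ~ G c -> exists g t, [/\ G g, I t & g `&` c <= t].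
  move=> nGc; apply: contrapT => noescape; apply/nGc/(Gmax (filter_adjoin G c)).
  - exact: filter_adjoin_filter.
  - exact: filter_adjoin_sub.
  - by move=> t [g [Gg gct]] It; apply: noescape; exists g, t.
  - exact: filter_adjoin_elt.
split=> //; first by move/GI; apply.
move=> a b Gab; apply: contrapT => /not_orP[/escape[g1 [t1 [Gg1 It1 le1]]]].
move=> /escape[g2 [t2 [Gg2 It2 le2]]].
apply: (GI ((g1 `&` g2) `&` (a `|` b))); first exact: Gmeet _ _ (Gmeet _ _ Gg1 Gg2) Gab.
apply: (Idn _ (t1 `|` t2)); last exact: Ijoin.
rewrite meetUr; apply: leU2.
  by apply: le_trans le1; apply: leI2 => //; apply: leIl.
by apply: le_trans le2; apply: leI2 => //; apply: leIr.
Qed.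

Theorem prime_filter_theorem F I :
  is_filter F -> is_ideal I -> avoids F I ->
  exists x, (forall c, F c -> pset x c) /\ avoids (pset x) I.
Proof.
move=> hF hI FI; have [G [hG FG GI Gmax]] := ex_maximal_filter hF FI.
by exists (Point (maximal_filter_prime hG hI GI Gmax)).
Qed.

Lemma point_filter x : is_filter (pset x).
Proof. by case: x => F []. Qed.

Lemma point_compl_ideal x : is_ideal (fun c => ~ pset x c).
Proof.
case: x => F [Ft Fb Fup _ Fprime] /=; split=> // [a b ab nFb Fa|a b nFa nFb].
  exact/nFb/(Fup a).
by case/Fprime.
Qed.

Lemma pset_meet x a b : pset x (a `&` b) <-> pset x a /\ pset x b.
Proof.
split; last by case=> xa xb; apply: (pf_meet (pprime x)).
by move=> xab; split; apply: (pf_up (pprime x) _ xab); [apply: leIl|apply: leIr].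
Qed.

Lemma pset_join x a b : pset x (a `|` b) <-> pset x a \/ pset x b.
Proof.
split; first exact: (pf_prime (pprime x)).
by case=> xab; apply: (pf_up (pprime x) _ xab); [apply: leUl|apply: leUr].
Qed.

End PrimeFilterTheorem.

Section BiHeytingPoints.
Context {d : Order.disp_t} {L : tbDistrLatticeType d}.
Variables imp coimp : L -> L -> L.
Hypothesis biH : is_biHeyting imp coimp.
Implicit Types (a b c : L) (x y z w : point L).

Lemma meet_imp_le a b : a `&` imp a b <= b.
Proof. by rewrite -biH.1. Qed.

Lemma coimp_le a b : coimp a b <= a.
Proof. by rewrite biH.2 leUr. Qed.

Lemma le_join_coimp a b : a <= b `|` coimp a b.
Proof. by rewrite -biH.2. Qed.

Lemma pset_mp y a b : pset y a -> pset y (imp a b) -> pset y b.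
Proof.
by move=> ya yab; apply: (pf_up (pprime y) (meet_imp_le a b)); apply/pset_meet.
Qed.

Lemma pset_imp y a b :
  pset y (imp a b) <-> forall z, ple y z -> pset z a -> pset z b.
Proof.
split=> [yab z yz za|Hyz]; first exact: pset_mp (yz _ yab).
apply: contrapT => nyab.
have [|z [yaz zb]] := prime_filter_theorem (filter_adjoin_filter a (point_filter y))
    (principal_ideal b).
  move=> t [u [yu uat]] tb; apply/nyab/(pf_up (pprime y) _ yu).
  by rewrite biH.1 meetC (le_trans uat tb).
apply: (zb b) (lexx b); apply: Hyz.
  by move=> u yu; apply/yaz/filter_adjoin_sub.
by apply/yaz/filter_adjoin_elt/point_filter.
Qed.

Lemma pset_coimp y a b :
  minimal y -> pset y (coimp a b) <-> pset y a /\ ~ pset y b.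
Proof.
move=> ymin; split=> [yab|[ya nyb]]; last first.
  by case/pset_join: (pf_up (pprime y) (le_join_coimp a b) ya).
split; first exact: (pf_up (pprime y) (coimp_le a b) yab).
have [|z [az zI]] := prime_filter_theorem (principal_filter a)
    (ideal_adjoin_ideal b (point_compl_ideal y)).
  move=> t le_at [j [nyj tjb]]; apply/nyj/(pf_up (pprime y) _ yab).
  by rewrite biH.2 joinC (le_trans le_at tjb).
have zy : ple z y by move=> t zt; apply: contrapT => nyt; apply/(zI t zt)/ideal_adjoin_sub.
have yz : ple y z by apply: contrapT => nyz; apply: (ymin z).
by move=> /yz zb; apply/(zI b zb)/ideal_adjoin_elt/point_compl_ideal.
Qed.

Hypothesis biLC : validates_biLC imp.

Lemma ple_total_above y z w : ple y z -> ple y w -> ple z w \/ ple w z.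
Proof.
move=> yz yw; apply: contrapT; rewrite /ple.
case/not_orP=> /existsNP[p /not_implyP[zp nwp]] /existsNP[q /not_implyP[wq nzq]].
have : pset y (imp p q `|` imp q p) by rewrite biLC; apply: pf_top (pprime y).
by case/pset_join=> [/yz|/yw] ?; [apply/nzq/(pset_mp zp)|apply/nwp/(pset_mp wq)].
Qed.

Lemma above_immediate_pred y x z :
  immediate_pred y x -> ple y z -> ple z y \/ ple x z.
Proof.
move=> [[yx _] nomid] yz.
have [xz|nxz] := pselect (ple x z); first by right.
have [zy|nzy] := pselect (ple z y); first by left.
by case: (ple_total_above yz yx) => // zx; exfalso; apply: nomid; exists z.
Qed.

Lemma pset_imp_transfer x y1 y2 a b :
  immediate_pred y1 x -> immediate_pred y2 x ->
  (pset y1 a <-> pset y2 a) -> (pset y1 b <-> pset y2 b) ->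
  pset y1 (imp a b) -> pset y2 (imp a b).
Proof.
move=> y1x y2x Ea Eb; rewrite !pset_imp => H1 z y2z za.
case: (above_immediate_pred y2x y2z) => [zy2|xz].
  by apply/y2z/Eb/(H1 y1) => //; apply/Ea/zy2.
by apply: (H1 z) => // c /(y1x.1.1 c); apply: xz.
Qed.

Lemma generated_pset_iff (G : L -> Prop) x y1 y2 :
  immediate_pred y1 x -> minimal y1 -> immediate_pred y2 x -> minimal y2 ->
  (forall c, G c -> (pset y1 c <-> pset y2 c)) ->
  forall a, generated imp coimp G a -> pset y1 a <-> pset y2 a.
Proof.
move=> y1x y1min y2x y2min EG a; elim=> {a} //.
- by split=> /(pf_bot (pprime _)).
- by split=> _; apply: pf_top (pprime _).
- by move=> a b _ Ea _ Eb; have := pset_meet y1 a b; have := pset_meet y2 a b; tauto.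
- by move=> a b _ Ea _ Eb; have := pset_join y1 a b; have := pset_join y2 a b; tauto.
- move=> a b _ Ea _ Eb; split; first exact: pset_imp_transfer y1x y2x Ea Eb.
  by apply: pset_imp_transfer y2x y1x _ _; apply: iff_sym.
- move=> a b _ Ea _ Eb; have := pset_coimp a b y1min; have := pset_coimp a b y2min.
  tauto.
Qed.

Lemma minimal_immediate_preds_same n (g : 'I_n -> L) x y1 y2 :
  (forall a, generated imp coimp (fun c => exists k, c = g k) a) ->
  immediate_pred y1 x -> minimal y1 -> immediate_pred y2 x -> minimal y2 ->
  (forall k, pset y1 (g k) <-> pset y2 (g k)) -> same y1 y2.
Proof.
move=> gen y1x y1min y2x y2min Eg.
have E a : pset y1 a <-> pset y2 a.
  by apply: (generated_pset_iff y1x y1min y2x y2min _ (gen a)) => _ [k ->].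
by split=> a /E.
Qed.

End BiHeytingPoints.

Theorem lemma3p12 (n : nat) (disp : Order.disp_t) (L : tbDistrLatticeType disp)
  (imp coimp : L -> L -> L) :
  (0 < n)%N ->
  is_biHeyting imp coimp ->
  infinite_alg L ->
  n_generated imp coimp n ->
  subdirectly_irreducible imp coimp ->
  validates_LFC imp coimp ->
  forall (x : point L) (m : nat) (ys : 'I_m -> point L),
    (forall i j, i <> j -> ~ same (ys i) (ys j)) ->
    (forall i, immediate_pred (ys i) x /\ minimal (ys i)) ->
    (m <= 2 ^ n)%N.
Proof.
move=> _ biH _ [g gen] _ [biLC _ _ _ _] x m ys ys_distinct ys_pred.
pose colour i : {ffun 'I_n -> bool} := [ffun k => `[< pset (ys i) (g k) >]].
suff colour_inj : injective colour.
  by have := leq_card colour colour_inj; rewrite card_ffun !card_ord card_bool.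
move=> i j colour_ij; apply: contrapT => nij; apply: (ys_distinct i j nij).
have [yix yimin] := ys_pred i; have [yjx yjmin] := ys_pred j.
apply: (minimal_immediate_preds_same biH biLC gen yix yimin yjx yjmin) => k.
by apply: asbool_eq_equiv; move/ffunP/(_ k): colour_ij; rewrite !ffunE.
Qed.
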